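(* For $\mathbf{x}=(x_1,\dots,x_N)^{\mathrm T}\in\mathbb{R}^N$ define $$\ell_{\mathrm{bbin}}(\mathbf{x})=N\sum_{n=1}^N\frac{1}{(1+x_n^2)^2}-\Big(\sum_{n=1}^N\frac{1}{1+x_n^2}\Big)^2.$$ Then $\ell_{\mathrm{bbin}}(\mathbf{x})\ge0$ for all $\mathbf{x}$, and $\ell_{\mathrm{bbin}}(\mathbf{x})=0$ if and only if $\mathbf{x}\in\{-\alpha,\alpha\}^N$ for some $\alpha\in\mathbb{R}$. Furthermore, $\ell_{\mathrm{bbin}}$ has no spurious stationary points: $\nabla\ell_{\mathrm{bbin}}(\mathbf{x})=\mathbf{0}$ holds only if $\mathbf{x}\in\{-\alpha,\alpha\}^N$ for some $\alpha\in\mathbb{R}$.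
   Context: A spurious stationary point of a differentiable function $\ell$ whose zero set is $\mathcal{X}$ is a point $\mathbf{x}\notin\mathcal{X}$ with $\nabla\ell(\mathbf{x})=\mathbf{0}$. *)

From Stdlib Require Import Reals List.
From Coquelicot Require Import Coquelicot.
Open Scope R_scope.

(* A point of R^N is represented as x : nat -> R, of which only the
   coordinates x 0, ..., x (N-1) matter. *)

Definition fsum (N : nat) (f : nat -> R) : R :=
  fold_right Rplus 0 (map f (seq 0 N)).

Definition l_bbin (N : nat) (x : nat -> R) : R :=
  INR N * fsum N (fun n => 1 / (1 + x n ^ 2) ^ 2)
  - (fsum N (fun n => 1 / (1 + x n ^ 2))) ^ 2.

Definition upd (x : nat -> R) (k : nat) (t : R) : nat -> R :=
  fun n => if Nat.eqb n k then x n + t else x n.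

Definition has_partial (f : (nat -> R) -> R) (x : nat -> R) (k : nat) (d : R) : Prop :=
  is_derive (fun t => f (upd x k t)) 0 d.

Definition grad_zero (N : nat) (f : (nat -> R) -> R) (x : nat -> R) : Prop :=
  forall k, (k < N)%nat -> has_partial f x k 0.

Definition in_pm (N : nat) (a : R) (x : nat -> R) : Prop :=
  forall n, (n < N)%nat -> x n = a \/ x n = - a.

(* Put y_n = 1/(1+x_n^2).  Then l_bbin is the spread N Σ y_n^2 - (Σ y_n)^2, which by
   Lagrange's identity is Σ_{i<j} (y_i - y_j)^2: it is nonnegative and vanishes exactly
   when all y_n, i.e. all x_n^2, coincide.  With S = Σ y_n, the k-th partial derivative
   is -4 x_k y_k^2 (N y_k - S), so at a stationary point every k has x_k = 0 (that is,
   y_k = 1) or N y_k = S; in both cases (1 - y_k)(N y_k - S) = 0.  Summing over k gives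
   -(N Σ y_k^2 - S^2) = 0, so a stationary point is a zero of l_bbin. *)

From Stdlib Require Import Reals List Lra Psatz.
From Coquelicot Require Import Coquelicot.
Open Scope R_scope.

Lemma fsum0 (f : nat -> R) : fsum 0 f = 0.
Proof. reflexivity. Qed.

Lemma fsum_S (N : nat) (f : nat -> R) : fsum (S N) f = fsum N f + f N.
Proof.
  unfold fsum; rewrite seq_S, map_app, fold_right_app; simpl.
  generalize (map f (seq 0 N)); intros l.
  induction l as [|a l IH]; simpl; [|rewrite IH]; ring.
Qed.

Lemma fsum_ext (N : nat) (f g : nat -> R) :
  (forall n, (n < N)%nat -> f n = g n) -> fsum N f = fsum N g.
Proof.
  induction N as [|N IH]; intros Hfg; [reflexivity|].
  rewrite !fsum_S, IH, Hfg; auto; lia.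
Qed.

Lemma fsum_const (N : nat) (c : R) : fsum N (fun _ => c) = INR N * c.
Proof.
  induction N as [|N IH]; [rewrite fsum0; simpl; ring|].
  rewrite fsum_S, IH, S_INR; ring.
Qed.

Lemma fsum_ge0 (N : nat) (f : nat -> R) : (forall n, 0 <= f n) -> 0 <= fsum N f.
Proof.
  intros Hf; induction N as [|N IH]; rewrite ?fsum0, ?fsum_S; [lra|].
  specialize (Hf N); lra.
Qed.

Lemma fsum_eq0_ge0 (N : nat) (f : nat -> R) :
  (forall n, 0 <= f n) -> fsum N f = 0 -> forall n, (n < N)%nat -> f n = 0.
Proof.
  intros Hf; induction N as [|N IH]; intros Hsum n Hn; [lia|].
  rewrite fsum_S in Hsum.
  pose proof (fsum_ge0 N f Hf); pose proof (Hf N).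
  destruct (Nat.eq_dec n N) as [->|HnN]; [lra|].
  apply IH; [lra|lia].
Qed.

Lemma fsum_delta (N k : nat) (f : nat -> R) : (k < N)%nat ->
  fsum N (fun n => if Nat.eqb n k then f n else 0) = f k.
Proof.
  induction N as [|N IH]; intros Hk; [lia|].
  rewrite fsum_S.
  destruct (Nat.eq_dec k N) as [->|HkN].
  - rewrite Nat.eqb_refl, (fsum_ext N _ (fun _ => 0)), fsum_const; [ring|].
    intros n Hn; destruct (Nat.eqb_spec n N); [lia|reflexivity].
  - rewrite IH by lia; destruct (Nat.eqb_spec N k); [lia|ring].
Qed.

Definition spread (N : nat) (y : nat -> R) : R :=
  INR N * fsum N (fun n => y n ^ 2) - fsum N y ^ 2.

Lemma spread_S (N : nat) (y : nat -> R) :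
  spread (S N) y = spread N y + fsum N (fun n => (y n - y N) ^ 2).
Proof.
  assert (Hsq : forall (c : R) M, fsum M (fun n => (y n - c) ^ 2)
                = fsum M (fun n => y n ^ 2) - 2 * c * fsum M y + INR M * c ^ 2).
  { intros c M; induction M as [|M IH]; [rewrite !fsum0; simpl; ring|].
    rewrite !fsum_S, IH, S_INR; ring. }
  unfold spread; rewrite !fsum_S, S_INR, Hsq; ring.
Qed.

Lemma spread_ge0 (N : nat) (y : nat -> R) : 0 <= spread N y.
Proof.
  induction N as [|N IH]; [unfold spread; rewrite !fsum0; simpl; lra|].
  rewrite spread_S.
  pose proof (fsum_ge0 N (fun n => (y n - y N) ^ 2) (fun n => pow2_ge_0 _)); lra.
Qed.

Lemma spread_eq0 (N : nat) (y : nat -> R) :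
  spread N y = 0 -> forall n, (n < N)%nat -> y n = y 0%nat.
Proof.
  induction N as [|N IH]; intros H0 n Hn; [lia|].
  rewrite spread_S in H0.
  pose proof (spread_ge0 N y) as Hspread.
  pose proof (fsum_ge0 N (fun n => (y n - y N) ^ 2) (fun n => pow2_ge_0 _)) as Hdev.
  destruct (Nat.eq_dec n N) as [->|HnN]; [|apply IH; [lra|lia]].
  destruct N as [|N]; [reflexivity|].
  assert (Hdev0 : fsum (S N) (fun n => (y n - y (S N)) ^ 2) = 0) by lra.
  pose proof (fsum_eq0_ge0 _ _ (fun n => pow2_ge_0 _) Hdev0 0%nat ltac:(lia)).
  simpl in *; nra.
Qed.

Lemma spread_const (N : nat) (y : nat -> R) (c : R) :
  (forall n, (n < N)%nat -> y n = c) -> spread N y = 0.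
Proof.
  intros Hy; unfold spread.
  rewrite (fsum_ext N _ (fun _ => c ^ 2)), (fsum_ext N y (fun _ => c)), !fsum_const.
  - ring.
  - exact Hy.
  - intros n Hn; rewrite Hy; auto.
Qed.

Lemma fsum_one_sub_mul_deviation (N : nat) (y : nat -> R) :
  fsum N (fun k => (1 - y k) * (INR N * y k - fsum N y)) = - spread N y.
Proof.
  assert (Hlin : forall (c d : R) M,
             fsum M (fun k => (1 - y k) * (c * y k - d))
             = c * fsum M y - INR M * d - c * fsum M (fun k => y k ^ 2) + d * fsum M y).
  { intros c d M; induction M as [|M IH]; [rewrite !fsum0; simpl; ring|].
    rewrite !fsum_S, IH, S_INR; ring. }
  rewrite Hlin; unfold spread; ring.
Qed.

Definition bell (u : R) : R := 1 / (1 + u ^ 2).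

Lemma bell_pos (u : R) : 0 < bell u.
Proof. unfold bell; apply Rdiv_lt_0_compat; nra. Qed.

Lemma bell_eq (u v : R) : bell u = bell v <-> u = v \/ u = - v.
Proof.
  unfold bell; split.
  - intros Huv.
    assert (Hsq : u ^ 2 = v ^ 2).
    { assert (1 + u ^ 2 = 1 + v ^ 2); [|lra].
      rewrite <- (Rinv_inv (1 + u ^ 2)), <- (Rinv_inv (1 + v ^ 2)).
      unfold Rdiv in Huv; rewrite !Rmult_1_l in Huv; now rewrite Huv. }
    assert (Hprod : (u - v) * (u + v) = 0) by nra.
    destruct (Rmult_integral _ _ Hprod); [left|right]; lra.
  - intros [-> | ->]; [reflexivity|]; f_equal; ring.
Qed.

Lemma is_derive_bell (u : R) : is_derive bell u (-2 * u * bell u ^ 2).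
Proof.
  unfold bell; assert (0 < 1 + u ^ 2) by nra.
  auto_derive; [lra|]; field; lra.
Qed.

Lemma is_derive_bell_sq (u : R) :
  is_derive (fun u => bell u ^ 2) u (-4 * u * bell u ^ 3).
Proof.
  unfold bell; assert (0 < 1 + u ^ 2) by nra.
  auto_derive; [lra|]; field; lra.
Qed.

Lemma l_bbin_spread (N : nat) (x : nat -> R) :
  l_bbin N x = spread N (fun n => bell (x n)).
Proof.
  unfold l_bbin, spread, bell; f_equal; f_equal.
  apply fsum_ext; intros n _; assert (0 < 1 + x n ^ 2) by nra; field; lra.
Qed.

Lemma is_derive_const_R (c t : R) : is_derive (fun _ => c) t 0.
Proof. apply is_derive_Reals, derivable_pt_lim_const. Qed.

Lemma is_derive_fsum (N : nat) (g : nat -> R -> R) (g' : nat -> R) (t : R) :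
  (forall n, (n < N)%nat -> is_derive (g n) t (g' n)) ->
  is_derive (fun s => fsum N (fun n => g n s)) t (fsum N g').
Proof.
  induction N as [|N IH]; intros Hg.
  - exact (is_derive_const_R 0 t).
  - rewrite fsum_S.
    apply (is_derive_ext (fun s => fsum N (fun n => g n s) + g N s));
      [intros s; now rewrite fsum_S|].
    apply (is_derive_plus (fun s => fsum N (fun n => g n s)) (g N)).
    + apply IH; intros n Hn; apply Hg; lia.
    + apply Hg; lia.
Qed.

Lemma upd_0 (x : nat -> R) (k n : nat) : upd x k 0 n = x n.
Proof. unfold upd; destruct (Nat.eqb n k); ring. Qed.

Lemma has_partial_fsum (N k : nat) (g : R -> R) (g' : R -> R) (x : nat -> R) :
  (k < N)%nat -> (forall u, is_derive g u (g' u)) ->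
  has_partial (fun x => fsum N (fun n => g (x n))) x k (g' (x k)).
Proof.
  intros Hk Hg; unfold has_partial.
  rewrite <- (fsum_delta N k (fun n => g' (x n))) by exact Hk.
  apply is_derive_fsum; intros n _; unfold upd.
  destruct (Nat.eqb n k).
  - assert (Hshift : is_derive (fun t => x n + t) 0 1) by (auto_derive; auto; ring).
    pose proof (is_derive_comp g _ 0 _ _ (Hg (x n + 0)) Hshift) as Hcomp.
    rewrite Rplus_0_r in Hcomp.
    replace (g' (x n)) with (scal 1 (g' (x n))); [exact Hcomp|].
    unfold scal; simpl; unfold mult; simpl; ring.
  - apply is_derive_const_R.
Qed.

Lemma partial_l_bbin (N k : nat) (x : nat -> R) : (k < N)%nat ->
  has_partial (l_bbin N) x k
    (-4 * x k * bell (x k) ^ 2 * (INR N * bell (x k) - fsum N (fun n => bell (x n)))).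
Proof.
  intros Hk; unfold has_partial.
  pose proof (has_partial_fsum N k (fun u => bell u ^ 2) _ x Hk is_derive_bell_sq) as Hsq.
  pose proof (has_partial_fsum N k bell _ x Hk is_derive_bell) as Hlin.
  unfold has_partial in Hsq, Hlin.
  pose proof (is_derive_minus _ _ 0 _ _ (is_derive_scal _ 0 (INR N) _ Hsq)
                (is_derive_pow _ 2 0 _ Hlin)) as Hdiff.
  cbv beta in Hdiff.
  rewrite (fsum_ext N (fun n => bell (upd x k 0 n)) (fun n => bell (x n))) in Hdiff
    by (intros n _; now rewrite upd_0).
  eapply is_derive_ext; [intros t; symmetry; apply l_bbin_spread|].
  unfold spread.
  replace (-4 * x k * bell (x k) ^ 2 * (INR N * bell (x k) - fsum N (fun n => bell (x n))))
    with (minus (INR N * (-4 * x k * bell (x k) ^ 3))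
                (INR 2 * (-2 * x k * bell (x k) ^ 2) * fsum N (fun n => bell (x n)) ^ 1))
    by (unfold minus, plus, opp; simpl; ring).
  exact Hdiff.
Qed.

Lemma grad_zero_l_bbin (N : nat) (x : nat -> R) :
  grad_zero N (l_bbin N) x -> forall k, (k < N)%nat ->
  (1 - bell (x k)) * (INR N * bell (x k) - fsum N (fun n => bell (x n))) = 0.
Proof.
  intros Hgrad k Hk.
  pose proof (is_derive_unique _ _ _ (Hgrad k Hk)) as Hzero.
  rewrite (is_derive_unique _ _ _ (partial_l_bbin N k x Hk)) in Hzero.
  pose proof (bell_pos (x k)) as Hpos.
  assert (Hfac : x k = 0 \/ INR N * bell (x k) - fsum N (fun n => bell (x n)) = 0).
  { destruct (Rmult_integral _ _ Hzero) as [H|H]; [|now right].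
    destruct (Rmult_integral _ _ H) as [H'|H']; [|nra].
    left; lra. }
  destruct Hfac as [Hx0|Hcrit]; [|rewrite Hcrit; ring].
  replace (bell (x k)) with 1 by (unfold bell; rewrite Hx0; field); ring.
Qed.

Lemma l_bbin_eq0 (N : nat) (x : nat -> R) : l_bbin N x = 0 <-> exists a, in_pm N a x.
Proof.
  rewrite l_bbin_spread; split.
  - intros H0; exists (x 0%nat); intros n Hn.
    apply bell_eq, (spread_eq0 N _ H0 n Hn).
  - intros [a Ha]; apply (spread_const N _ (bell a)); intros n Hn.
    apply bell_eq, Ha, Hn.
Qed.

Theorem mainTheorem10 (N : nat) :
  (forall x : nat -> R, 0 <= l_bbin N x) /\
  (forall x : nat -> R, l_bbin N x = 0 <-> exists a : R, in_pm N a x) /\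
  (forall x : nat -> R, grad_zero N (l_bbin N) x -> exists a : R, in_pm N a x).
Proof.
  split; [intros x; rewrite l_bbin_spread; apply spread_ge0|].
  split; [apply l_bbin_eq0|].
  intros x Hgrad; apply l_bbin_eq0.
  rewrite l_bbin_spread.
  pose proof (fsum_one_sub_mul_deviation N (fun n => bell (x n))) as Hsum.
  rewrite (fsum_ext N _ (fun _ => 0)), fsum_const in Hsum
    by exact (grad_zero_l_bbin N x Hgrad).
  lra.
Qed.
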